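(* Let $A$ be a finite alphabet, $L\subseteq A^*$ and $m\in\mathbb{N}$. If all words in $\min(L)$ have length at most $m$, then ${\uparrow}L$ is $m$-PT while ${\uparrow}_<L$ and $\min(L)$ are $(m+1)$-PT.
   Context: $u\sqsubseteq v$ (subword) means $u=a_1\cdots a_n$ with letters $a_i$ and $v=v_0a_1v_1\cdots a_nv_n$; $u\sqsubset v$ means $u\sqsubseteq v$ and $u\ne v$. ${\uparrow}L=\{v~|~\exists u\in L: u\sqsubseteq v\}$, ${\uparrow}_<L=\{v~|~\exists u\in L: u\sqsubset v\}$, $\min(L)=\{u\in L~|~\forall v\in L: v\not\sqsubset u\}$. $u\sim_n v$ iff $u,v$ have the same subwords of length at most $n$; $L$ is $n$-PT if it is a union of $\sim_n$-classes. *)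

From mathcomp Require Import all_boot.
Set Implicit Arguments. Unset Strict Implicit. Unset Printing Implicit Defensive.

Definition lang (A : finType) := seq A -> Prop.

Definition subword (A : finType) (u v : seq A) : Prop := subseq u v.
Definition psubword (A : finType) (u v : seq A) : Prop := subseq u v /\ u <> v.

Definition upc (A : finType) (L : lang A) : lang A :=
  fun v => exists2 u, L u & subword u v.
Definition supc (A : finType) (L : lang A) : lang A :=
  fun v => exists2 u, L u & psubword u v.
Definition minL (A : finType) (L : lang A) : lang A :=
  fun u => L u /\ forall v, L v -> ~ psubword v u.

Definition simn (A : finType) (n : nat) (u v : seq A) : Prop :=
  forall w : seq A, size w <= n -> (subword w u <-> subword w v).

Definition PT (A : finType) (n : nat) (L : lang A) : Prop :=
  forall u v, simn n u v -> (L u <-> L v).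

From mathcomp Require Import all_boot.
From Stdlib Require Import Classical.
Set Implicit Arguments. Unset Strict Implicit.

(* Every word of L lies above a word of min(L), of length at most m, and
   ~_m preserves being above such a word: so ↑L is m-PT.  One more letter of
   precision also preserves being STRICTLY above it: if w ⊏ u with |w| <= m
   and u ~_(m+1) v but w = v, then the prefix of u of length |v| + 1 would be
   a subword of v.  Finally min(L) = ↑L \ ↑_<L. *)

Section Subwords.
Variable A : finType.
Implicit Types (u v w : seq A) (L : lang A).

Lemma psubword_size u v : psubword u v -> size u < size v.
Proof.
move=> [uv neq]; have [le eqE] := size_subseq_leqif uv.
by rewrite ltn_neqAle le andbT eqE; apply/eqP.
Qed.

Lemma minL_below L u : L u -> exists2 w, minL L w & subword w u.
Proof.
elim: {u}(size u) {-2}u (leqnn (size u)) => [|n IHn] u size_u Lu.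
  exists u; last exact: subseq_refl.
  by split=> // v _ /psubword_size; rewrite ltnNge (leq_trans size_u).
have [[v [Lv vu]] | no_below] := classic (exists v, L v /\ psubword v u).
  have [w minw wv] := IHn v (leq_trans (psubword_size vu) size_u) Lv.
  by exists w => //; apply: subseq_trans wv vu.1.
exists u; last exact: subseq_refl.
by split=> // v Lv vu; apply: no_below; exists v.
Qed.

Lemma minL_upcE L u : minL L u <-> upc L u /\ ~ supc L u.
Proof.
split=> [[Lu minu] | [[w Lw wu] not_above]].
  split=> [|[w Lw wu]]; last exact: minu wu.
  by exists u; last exact: subseq_refl.
case: (eqVneq w u) => [w_eq_u | neq].
  by subst w; split=> // v Lv vu; apply: not_above; exists v.
by case: not_above; exists w => //; split=> //; apply/eqP.
Qed.

Lemma simn_sym n u v : simn n u v -> simn n v u.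
Proof. by move=> uv w size_w; rewrite (uv w size_w). Qed.

Lemma simn_leq n k u v : k <= n -> simn n u v -> simn k u v.
Proof. by move=> kn uv w size_w; apply: uv; apply: leq_trans kn. Qed.

Lemma simn_closed_PT n L :
  (forall u v, simn n u v -> L u -> L v) -> PT n L.
Proof.
by move=> simn_stable u v uv; split; apply: simn_stable => //; apply: simn_sym.
Qed.

Lemma simn_psubword m u v w :
  simn m.+1 u v -> psubword w u -> size w <= m -> psubword w v.
Proof.
move=> uv wu size_w; split; first by apply/(uv w); [apply: leqW | case: wu].
move=> w_eq_v; rewrite -w_eq_v in uv.
have size_pre : size (take (size w).+1 u) = (size w).+1.
  by rewrite size_takel // psubword_size.
have size_pre_le : size (take (size w).+1 u) <= m.+1 by rewrite size_pre.
have /size_subseq := proj1 (uv _ size_pre_le) (take_subseq u _).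
by rewrite size_pre ltnn.
Qed.

Section BoundedMinima.
Variables (L : lang A) (m : nat).
Hypothesis size_minL : forall u, minL L u -> size u <= m.

Lemma upc_PT : PT m (upc L).
Proof.
apply: simn_closed_PT => u v uv [w Lw wu].
have [w' [Lw' minw'] w'w] := minL_below Lw.
exists w' => //; apply/(uv w' (size_minL (conj Lw' minw'))).
exact: subseq_trans w'w wu.
Qed.

Lemma supc_PT : PT m.+1 (supc L).
Proof.
apply: simn_closed_PT => u v uv [w Lw wu].
have [w' minw' w'w] := minL_below Lw.
exists w'; first exact: minw'.1.
have w'u : psubword w' u.
  split; first exact: subseq_trans w'w wu.1.
  move=> w'_eq_u; have := leq_ltn_trans (size_subseq w'w) (psubword_size wu).
  by rewrite -w'_eq_u ltnn.
exact: simn_psubword uv w'u (size_minL minw').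
Qed.

Lemma minL_PT : PT m.+1 (minL L).
Proof.
by move=> u v uv; rewrite !minL_upcE (upc_PT (simn_leq (leqnSn m) uv)) (supc_PT uv).
Qed.

End BoundedMinima.
End Subwords.

Theorem corollary9 (A : finType) (L : lang A) (m : nat) :
  (forall u, minL L u -> size u <= m) ->
  PT m (upc L) /\ PT m.+1 (supc L) /\ PT m.+1 (minL L).
Proof.
move=> size_minL.
by split; [|split]; [apply: upc_PT | apply: supc_PT | apply: minL_PT].
Qed.
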